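(* Let $I=\{1,2\}$, $J=\{-1,-2\}$, and let $\{\tau_{m,n}(\boldsymbol t)\}_{(m,n)\in\mathbb Z^2}$ be a nowhere-vanishing solution of the lattice $q$-UC hierarchy satisfying the homogeneity condition $\tau_{m,n}(q\boldsymbol t)=q^{d_{m,n}}\tau_{m,n}(\boldsymbol t)$, where $d_{m,n}\in\mathbb C$ satisfy $d_{m,n}+d_{m+1,n+1}=d_{m,n+1}+d_{m+1,n}$. Put $w_{m,n}=\tau_{m+1,n}/\tau_{m,n+1}$, $c_{m,n}=q^{d_{m+1,n}-d_{m,n+1}}$ (so that $T_1T_2(w_{m,n})=c_{m,n}T_{-1}T_{-2}(w_{m,n})$), and $$f_{m,n}=\frac{w^{(1)}_{m,n}}{w^{(-1)}_{m,n}},\qquad g_{m,n}=\frac{w^{(1,-1)}_{m,n}}{w^{(-1,-2)}_{m,n}}.$$ Then, with $T=T_1T_2$ and whenever the denominators are nonzero, $$\frac{T(f_{m,n})}{f_{m+1,n+1}}=\frac{c_{m,n}}{c_{m,n+1}}\cdot\frac{\bigl(g_{m+1,n}-\frac{t_1}{t_{-2}}\bigr)\bigl(g_{m,n+1}-c_{m,n+1}\frac{t_{-1}}{t_2}\bigr)}{\bigl(g_{m,n+1}-\frac{t_1}{t_{-2}}\bigr)\bigl(g_{m+1,n}-c_{m+1,n}\frac{t_{-1}}{t_2}\bigr)},$$ $$\frac{g_{m,n}}{T^{-1}(g_{m+1,n+1})}=\frac{c_{m+1,n}}{c_{m+1,n+1}}\cdot\frac{\bigl(f_{m+1,n}-\frac{t_1}{t_{-1}}\bigr)\bigl(f_{m,n+1}-qc_{m,n+1}\frac{t_{-2}}{t_2}\bigr)}{\bigl(f_{m,n+1}-\frac{t_1}{t_{-1}}\bigr)\bigl(f_{m+1,n}-qc_{m+1,n}\frac{t_{-2}}{t_2}\bigr)}.$$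 Consequently, $T$ acts on the variables $f_{m,n},g_{m,n}$ by birational transformations: $T^{\pm1}(f_{m,n}),T^{\pm1}(g_{m,n})$ are rational functions of the $f_{k,l},g_{k,l}$ with coefficients rational in $t_{\pm1},t_{\pm2}$ and the $c_{k,l}$. Equivalently, with $\alpha=t_1/t_{-2}$, $\beta=t_{-1}/t_2$, $\gamma=t_1/t_{-1}$, $\delta=t_{-2}/t_2$ (so $\alpha\delta/(\beta\gamma)=1$ and $T:(\alpha,\beta,\gamma,\delta)\mapsto(q\alpha,\beta/q,q\gamma,\delta/q)$), writing $\overline F=T(F)$: $$\overline{f_{m,n}}=\frac{c_{m,n}}{c_{m,n+1}}\frac{(g_{m+1,n}-\alpha)(g_{m,n+1}-c_{m,n+1}\beta)}{(g_{m,n+1}-\alpha)(g_{m+1,n}-c_{m+1,n}\beta)}f_{m+1,n+1},$$ $$\overline{g_{m,n}}=\frac{c_{m+1,n}}{c_{m+1,n+1}}\frac{(\overline{f_{m+1,n}}-q\gamma)(\overline{f_{m,n+1}}-c_{m,n+1}\delta)}{(\overline{f_{m,n+1}}-q\gamma)(\overline{f_{m+1,n}}-c_{m+1,n}\delta)}g_{m+1,n+1}.$$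
   Context: $q\in\mathbb C^*$, $\boldsymbol t=(t_1,t_2,t_{-1},t_{-2})$. $T_k$ is the $q$-shift: $T_k(t_k)=qt_k$ for $k\in\{1,2\}$, $T_k(t_k)=q^{-1}t_k$ for $k\in\{-1,-2\}$, $T_k(t_l)=t_l$ for $l\ne k$. Notation: $F^{(i_1,\dots,i_r)}=T_{i_1}\cdots T_{i_r}(F)$. The lattice $q$-UC hierarchy is the system $$t_iT_i(\tau_{m,n+1})T_j(\tau_{m+1,n})-t_jT_j(\tau_{m,n+1})T_i(\tau_{m+1,n})=(t_i-t_j)T_iT_j(\tau_{m,n})\tau_{m+1,n+1}$$ for all $i,j\in\{1,2,-1,-2\}$ and all $(m,n)\in\mathbb Z^2$. *)

From HB Require Import structures.
From mathcomp Require Import all_boot all_order all_algebra.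
Set Implicit Arguments. Unset Strict Implicit. Unset Printing Implicit Defensive.
Import Order.TTheory GRing.Theory Num.Theory.
Local Open Scope ring_scope.

Record pt (R : Type) := Pt { t1 : R; t2 : R; tm1 : R; tm2 : R }.

Inductive idx := i1 | i2 | im1 | im2.

Section Defs.
Variable R : fieldType.
Variable q : R.

Definition tcomp (k : idx) (p : pt R) : R :=
  match k with i1 => t1 p | i2 => t2 p | im1 => tm1 p | im2 => tm2 p end.

Definition shift (k : idx) (p : pt R) : pt R :=
  match k with
  | i1 => Pt (q * t1 p) (t2 p) (tm1 p) (tm2 p)
  | i2 => Pt (t1 p) (q * t2 p) (tm1 p) (tm2 p)
  | im1 => Pt (t1 p) (t2 p) (q^-1 * tm1 p) (tm2 p)
  | im2 => Pt (t1 p) (t2 p) (tm1 p) (q^-1 * tm2 p)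
  end.

Definition Tk (k : idx) (F : pt R -> R) : pt R -> R := fun p => F (shift k p).

Definition TT (F : pt R -> R) : pt R -> R := Tk i1 (Tk i2 F).
Definition TTinv (F : pt R -> R) : pt R -> R :=
  fun p => F (Pt (q^-1 * t1 p) (q^-1 * t2 p) (tm1 p) (tm2 p)).

Definition scale (p : pt R) : pt R :=
  Pt (q * t1 p) (q * t2 p) (q * tm1 p) (q * tm2 p).

Definition admissible (p : pt R) : Prop :=
  (t1 p != 0) /\ (t2 p != 0) /\ (tm1 p != 0) /\ (tm2 p != 0).

Definition qUC_hierarchy (tau : int -> int -> pt R -> R) : Prop :=
  forall (i j : idx) (m n : int) (p : pt R), admissible p ->
    tcomp i p * Tk i (tau m (n + 1)) p * Tk j (tau (m + 1) n) p
    - tcomp j p * Tk j (tau m (n + 1)) p * Tk i (tau (m + 1) n) p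
    = (tcomp i p - tcomp j p) * Tk i (Tk j (tau m n)) p * tau (m + 1) (n + 1) p.

Definition w (tau : int -> int -> pt R -> R) (m n : int) : pt R -> R :=
  fun p => tau (m + 1) n p / tau m (n + 1) p.

(* c_{m,n} = q^{d_{m+1,n} - d_{m,n+1}}, with e_{m,n} standing for q^{d_{m,n}} *)
Definition cc (e : int -> int -> R) (m n : int) : R := e (m + 1) n / e m (n + 1).

Definition ff (tau : int -> int -> pt R -> R) (m n : int) : pt R -> R :=
  fun p => Tk i1 (w tau m n) p / Tk im1 (w tau m n) p.

Definition gg (tau : int -> int -> pt R -> R) (m n : int) : pt R -> R :=
  fun p => Tk i1 (Tk im1 (w tau m n)) p / Tk im1 (Tk im2 (w tau m n)) p.

End Defs.

From mathcomp Require Import all_boot all_algebra ring.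
Import GRing.Theory.
Local Open Scope ring_scope.

(* 1. Homogeneity tau(q t) = e tau(t) lets us move a point by the diagonal
      q-scaling (tau_qq, tau_qinv, tau_q1_inv); in particular
      T_1 T_2 (w) = c T_-1 T_-2 (w) (w_T12).
   2. Dividing the bilinear equation (i, j) by one of its left-hand terms
      gives  t_i w^(j)/w^(i) - t_j = (t_i - t_j) X_ij,  X_ij a ratio of four
      tau's (uc_ratio, uc_cross).
   3. Since f and g are such ratios w^(j)/w^(i) (up to a factor c, by
      step 1), each of the four quantities f - gamma, f - q c delta,
      g - alpha, g - c beta factors as a constant times one X_ij
      (f_sub_gamma, f_sub_qcdelta, g_sub_alpha, g_sub_cbeta).
   4. Substituting these factorizations, both evolution identities become
      rational identities between tau's at normalized points, closed by
      [field] (f_evolution, g_evolution); the forward forms follow, and the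
      theorem collects the four statements. *)

Section QPainleveEvolution.
Variable R : fieldType.
Variables (q : R) (e : int -> int -> R) (tau : int -> int -> pt R -> R).
Hypothesis q_neq0 : q != 0.
Hypothesis e_neq0 : forall m n, e m n != 0.
Hypothesis tau_UC : qUC_hierarchy q tau.
Hypothesis tau_neq0 : forall m n p, admissible p -> tau m n p != 0.
Hypothesis tau_hom : forall m n p, admissible p -> tau m n (scale q p) = e m n * tau m n p.

Lemma admissibleP (p : pt R) : admissible p ->
  [/\ t1 p != 0, t2 p != 0, tm1 p != 0 & tm2 p != 0].
Proof. by case=> ? [? [? ?]]. Qed.

Lemma admissible_Pt (a b c d : R) :
  a != 0 -> b != 0 -> c != 0 -> d != 0 -> admissible (Pt a b c d).
Proof. by move=> *; do !split. Qed.

Lemma tau_Pt_neq0 (m n : int) (a b c d : R) :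
  a != 0 -> b != 0 -> c != 0 -> d != 0 -> tau m n (Pt a b c d) != 0.
Proof. by move=> *; apply/tau_neq0/admissible_Pt. Qed.

Ltac nonzero := repeat match goal with
  | |- is_true (_ && _) => apply/andP; split
  | |- is_true (_ * _ != 0) => apply: mulf_neq0
  | |- is_true (_^-1 != 0) => rewrite invr_eq0
  | |- is_true (tau _ _ (Pt _ _ _ _) != 0) => apply: tau_Pt_neq0
  | |- is_true (tau _ _ _ != 0) => apply: tau_neq0
  | |- is_true (e _ _ != 0) => exact: e_neq0
  | |- is_true (_ - _ != 0) => rewrite subr_eq0
  | h : is_true (?x != ?y) |- is_true (?y != ?x) => rewrite eq_sym
  | |- _ => assumption
  end.

Lemma tau_qq (m n : int) (a b c d : R) : a != 0 -> b != 0 -> c != 0 -> d != 0 ->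
  tau m n (Pt (q * a) (q * b) c d) = e m n * tau m n (Pt a b (q^-1 * c) (q^-1 * d)).
Proof.
move=> *; rewrite -tau_hom; last by apply: admissible_Pt; nonzero.
by rewrite /scale /= !mulVKf.
Qed.

Lemma tau_qinv (m n : int) (a b c d : R) :
  a != 0 -> b != 0 -> c != 0 -> d != 0 ->
  tau m n (Pt (q^-1 * a) (q^-1 * b) (q^-1 * c) (q^-1 * d)) = tau m n (Pt a b c d) / e m n.
Proof.
move=> *; rewrite -[in RHS](mulVKf q_neq0 a) -[in RHS](mulVKf q_neq0 b) tau_qq; try nonzero.
by rewrite [e m n * _]mulrC mulfK.
Qed.

Lemma tau_q1_inv (m n : int) (a b c d : R) :
  a != 0 -> b != 0 -> c != 0 -> d != 0 ->
  tau m n (Pt a (q^-1 * b) (q^-1 * c) (q^-1 * d)) = tau m n (Pt (q * a) b c d) / e m n.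
Proof.
move=> *; rewrite -[b in RHS](mulVKf q_neq0) tau_qq; try nonzero.
by rewrite [e m n * _]mulrC mulfK.
Qed.

Lemma pt_eta (p : pt R) : Pt (t1 p) (t2 p) (tm1 p) (tm2 p) = p.
Proof. by case: p. Qed.

Lemma admissible_shift (k : idx) (p : pt R) : admissible p -> admissible (shift q k p).
Proof. by case/admissibleP=> *; case: k; apply: admissible_Pt; nonzero. Qed.

Lemma cc_neq0 (m n : int) : cc e m n != 0.
Proof. by rewrite /cc; nonzero. Qed.

Lemma w_neq0 (m n : int) (p : pt R) : admissible p -> w tau m n p != 0.
Proof. by move=> hp; rewrite /w mulf_neq0 ?invr_eq0 ?tau_neq0. Qed.

Lemma tcomp_neq0 (k : idx) (p : pt R) : admissible p -> tcomp k p != 0.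
Proof. by case/admissibleP=> *; case: k. Qed.

(* The ratio of the right-hand side of the bilinear equation (i, j) to one of
   the terms of its left-hand side. *)
Definition uc_cross (i j : idx) (m n : int) (p : pt R) : R :=
  Tk q i (Tk q j (tau m n)) p * tau (m + 1) (n + 1) p
  / (Tk q j (tau m (n + 1)) p * Tk q i (tau (m + 1) n) p).

Lemma uc_ratio (i j : idx) (m n : int) (p : pt R) : admissible p ->
  tcomp i p * (Tk q j (w tau m n) p / Tk q i (w tau m n) p) - tcomp j p
  = (tcomp i p - tcomp j p) * uc_cross i j m n p.
Proof.
move=> hp; have E := tau_UC i j m n p hp.
have hTi := admissible_shift i p hp; have hTj := admissible_shift j p hp.
rewrite /uc_cross !mulrA -E /Tk /w.
by field; rewrite !tau_neq0.
Qed.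

Lemma w_T12 (m n : int) (p : pt R) : admissible p ->
  TT q (w tau m n) p = cc e m n * Tk q im1 (Tk q im2 (w tau m n)) p.
Proof.
case/admissibleP=> *; rewrite /TT /Tk /w /cc /= !tau_qq //.
by field; nonzero.
Qed.

(* Normalizing uc_ratio by t_i: the shape in which it is used below. *)
Lemma sub_ratio_factor {u v y X : R} : u != 0 ->
  u * y - v = (u - v) * X -> y - v / u = (1 - v / u) * X.
Proof.
move=> hu E; have -> : y - v / u = (u * y - v) / u by field.
by rewrite E; field.
Qed.

Lemma f_sub_gamma (m n : int) (p : pt R) : admissible p ->
  ff q tau m n p - t1 p / tm1 p = (1 - t1 p / tm1 p) * uc_cross im1 i1 m n p.
Proof.
move=> hp; have /admissibleP[_ _ h3 _] := hp.
exact: sub_ratio_factor h3 (uc_ratio im1 i1 m n p hp).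
Qed.

Lemma g_sub_alpha (m n : int) (p : pt R) : admissible p ->
  gg q tau m n p - t1 p / tm2 p
  = (1 - t1 p / tm2 p) * uc_cross im2 i1 m n (shift q im1 p).
Proof.
move=> hp; have /admissibleP[_ _ _ h4] := hp.
exact: sub_ratio_factor h4 (uc_ratio im2 i1 m n _ (admissible_shift im1 p hp)).
Qed.

Lemma g_sub_cbeta (m n : int) (p : pt R) : admissible p ->
  gg q tau m n p - cc e m n * (tm1 p / t2 p)
  = cc e m n * (1 - tm1 p / t2 p) * uc_cross i2 im1 m n (shift q i1 p).
Proof.
move=> hp; have /admissibleP[_ h2 _ _] := hp.
have hp1 := admissible_shift i1 p hp.
have E := sub_ratio_factor h2 (uc_ratio i2 im1 m n _ hp1).
have hT12 := admissible_shift i2 _ hp1.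
have hTm1 := admissible_shift im1 _ hp1.
have -> : gg q tau m n p = cc e m n * (Tk q im1 (w tau m n) (shift q i1 p)
                                      / Tk q i2 (w tau m n) (shift q i1 p)).
  rewrite /gg -[Tk q im1 (Tk q im2 _) _](mulKf (cc_neq0 m n)) -w_T12 //.
  by rewrite /TT /Tk; field; rewrite cc_neq0 !w_neq0.
by move: E => /= E; rewrite -mulrBr E mulrA.
Qed.

Lemma f_sub_qcdelta (m n : int) (p : pt R) : admissible p ->
  ff q tau m n p - q * cc e m n * (tm2 p / t2 p)
  = cc e m n * (1 - q * (tm2 p / t2 p))
    * uc_cross i2 im2 m n (Pt (t1 p) (q^-1 * t2 p) (q^-1 * tm1 p) (tm2 p)).
Proof.
set p' := Pt _ _ _ _; move=> hp; have /admissibleP[h1 h2 h3 h4] := hp.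
have hp' : admissible p' by apply: admissible_Pt; nonzero.
have E := sub_ratio_factor (tcomp_neq0 i2 _ hp') (uc_ratio i2 im2 m n _ hp').
have -> : ff q tau m n p = cc e m n * (Tk q im2 (w tau m n) p' / Tk q i2 (w tau m n) p').
  rewrite /ff /Tk /w /cc /= !mulVKf // !tau_q1_inv //.
  by field; nonzero.
have -> : q * cc e m n * (tm2 p / t2 p) = cc e m n * (tm2 p / (q^-1 * t2 p)).
  by field; nonzero.
have -> : q * (tm2 p / t2 p) = tm2 p / (q^-1 * t2 p) by field; nonzero.
by move: E => /= E; rewrite -mulrBr E mulrA.
Qed.

Lemma f_evolution (m n : int) (p : pt R) : admissible p ->
  (gg q tau m (n + 1) p - t1 p / tm2 p)
    * (gg q tau (m + 1) n p - cc e (m + 1) n * (tm1 p / t2 p)) != 0 ->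
  TT q (ff q tau m n) p / ff q tau (m + 1) (n + 1) p
  = cc e m n / cc e m (n + 1)
    * ((gg q tau (m + 1) n p - t1 p / tm2 p)
       * (gg q tau m (n + 1) p - cc e m (n + 1) * (tm1 p / t2 p)))
    / ((gg q tau m (n + 1) p - t1 p / tm2 p)
       * (gg q tau (m + 1) n p - cc e (m + 1) n * (tm1 p / t2 p))).
Proof.
move=> hp H; have /admissibleP[h1 h2 h3 h4] := hp.
rewrite !g_sub_alpha // !g_sub_cbeta // in H *.
have ha : t1 p != tm2 p.
  by apply: contraNneq H => ->; rewrite divff // subrr !(mul0r, mulr0).
have hb : tm1 p != t2 p.
  by apply: contraNneq H => ->; rewrite divff // subrr !(mul0r, mulr0).
rewrite /TT /ff /uc_cross /Tk /w /cc /= !tau_qq; try by nonzero.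
by field; nonzero.
Qed.

Lemma g_evolution (m n : int) (p : pt R) : admissible p ->
  (ff q tau m (n + 1) p - t1 p / tm1 p)
    * (ff q tau (m + 1) n p - q * cc e (m + 1) n * (tm2 p / t2 p)) != 0 ->
  gg q tau m n p / TTinv q (gg q tau (m + 1) (n + 1)) p
  = cc e (m + 1) n / cc e (m + 1) (n + 1)
    * ((ff q tau (m + 1) n p - t1 p / tm1 p)
       * (ff q tau m (n + 1) p - q * cc e m (n + 1) * (tm2 p / t2 p)))
    / ((ff q tau m (n + 1) p - t1 p / tm1 p)
       * (ff q tau (m + 1) n p - q * cc e (m + 1) n * (tm2 p / t2 p))).
Proof.
move=> hp H; have /admissibleP[h1 h2 h3 h4] := hp.
rewrite !f_sub_gamma // !f_sub_qcdelta // in H *.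
have hg : t1 p != tm1 p.
  by apply: contraNneq H => ->; rewrite divff // subrr !(mul0r, mulr0).
have hd : q * tm2 p != t2 p.
  apply: contraNneq H => <-.
  have -> : q * (tm2 p / (q * tm2 p)) = 1 by field; nonzero.
  by rewrite subrr !(mul0r, mulr0).
rewrite /TTinv /gg /uc_cross /Tk /w /cc /= !mulVKf // !tau_qinv; try by nonzero.
rewrite !tau_q1_inv ?pt_eta; try by nonzero.
by field; nonzero.
Qed.

Lemma ff_neq0 (m n : int) (p : pt R) : admissible p -> ff q tau m n p != 0.
Proof.
move=> hp; rewrite /ff /Tk mulf_neq0 ?invr_eq0 //;
  by apply/w_neq0/admissible_shift.
Qed.

Lemma gg_neq0 (m n : int) (p : pt R) : admissible p -> gg q tau m n p != 0.
Proof.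
move=> hp; rewrite /gg /Tk mulf_neq0 ?invr_eq0 //;
  by apply/w_neq0/admissible_shift/admissible_shift.
Qed.

Lemma f_forward (m n : int) (p : pt R) : admissible p ->
  (gg q tau m (n + 1) p - t1 p / tm2 p)
    * (gg q tau (m + 1) n p - cc e (m + 1) n * (tm1 p / t2 p)) != 0 ->
  TT q (ff q tau m n) p
  = cc e m n / cc e m (n + 1)
    * ((gg q tau (m + 1) n p - t1 p / tm2 p)
       * (gg q tau m (n + 1) p - cc e m (n + 1) * (tm1 p / t2 p)))
    / ((gg q tau m (n + 1) p - t1 p / tm2 p)
       * (gg q tau (m + 1) n p - cc e (m + 1) n * (tm1 p / t2 p)))
    * ff q tau (m + 1) (n + 1) p.
Proof. by move=> hp H; rewrite -(f_evolution m n p hp H) divfK ?ff_neq0. Qed.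

Lemma g_forward (m n : int) (p : pt R) : admissible p ->
  (TT q (ff q tau m (n + 1)) p - q * (t1 p / tm1 p))
    * (TT q (ff q tau (m + 1) n) p - cc e (m + 1) n * (tm2 p / t2 p)) != 0 ->
  TT q (gg q tau m n) p
  = cc e (m + 1) n / cc e (m + 1) (n + 1)
    * ((TT q (ff q tau (m + 1) n) p - q * (t1 p / tm1 p))
       * (TT q (ff q tau m (n + 1)) p - cc e m (n + 1) * (tm2 p / t2 p)))
    / ((TT q (ff q tau m (n + 1)) p - q * (t1 p / tm1 p))
       * (TT q (ff q tau (m + 1) n) p - cc e (m + 1) n * (tm2 p / t2 p)))
    * gg q tau (m + 1) (n + 1) p.
Proof.
move=> hp; have /admissibleP[h1 h2 h3 h4] := hp.
set p1 := Pt (q * t1 p) (q * t2 p) (tm1 p) (tm2 p).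
have hp1 : admissible p1 by apply: admissible_Pt; nonzero.
have TT_p1 (F : pt R -> R) : TT q F p = F p1 by [].
have TTinv_p1 (G : pt R -> R) : TTinv q G p1 = G p by rewrite /TTinv /= !mulKf ?pt_eta.
have qgamma : q * (t1 p / tm1 p) = t1 p1 / tm1 p1 by rewrite /= mulrA.
have cdelta (c : R) : c * (tm2 p / t2 p) = q * c * (tm2 p1 / t2 p1).
  by rewrite /=; field; nonzero.
rewrite !TT_p1 qgamma !cdelta => H.
by rewrite -(g_evolution m n p1 hp1 H) TTinv_p1 divfK ?gg_neq0.
Qed.

End QPainleveEvolution.

Theorem mainTheorem5 (R : numClosedFieldType) (q : R)
  (e : int -> int -> R) (tau : int -> int -> pt R -> R) :
  q != 0 ->
  (forall m n, e m n != 0) ->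
  (forall m n, e m n * e (m + 1) (n + 1) = e m (n + 1) * e (m + 1) n) ->
  qUC_hierarchy q tau ->
  (forall m n p, admissible p -> tau m n p != 0) ->
  (forall m n p, admissible p -> tau m n (scale q p) = e m n * tau m n p) ->
  forall (m n : int) (p : pt R), admissible p ->
  let f := ff q tau in
  let g := gg q tau in
  let c := cc e in
  let alpha := t1 p / tm2 p in
  let beta := tm1 p / t2 p in
  let gamma := t1 p / tm1 p in
  let delta := tm2 p / t2 p in
  [/\ (g m (n + 1) p - alpha) * (g (m + 1) n p - c (m + 1) n * beta) != 0 ->
        TT q (f m n) p / f (m + 1) (n + 1) p
        = c m n / c m (n + 1)
          * ((g (m + 1) n p - alpha) * (g m (n + 1) p - c m (n + 1) * beta))
          / ((g m (n + 1) p - alpha) * (g (m + 1) n p - c (m + 1) n * beta)),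
      (f m (n + 1) p - gamma) * (f (m + 1) n p - q * c (m + 1) n * delta) != 0 ->
        g m n p / TTinv q (g (m + 1) (n + 1)) p
        = c (m + 1) n / c (m + 1) (n + 1)
          * ((f (m + 1) n p - gamma) * (f m (n + 1) p - q * c m (n + 1) * delta))
          / ((f m (n + 1) p - gamma) * (f (m + 1) n p - q * c (m + 1) n * delta)),
      (g m (n + 1) p - alpha) * (g (m + 1) n p - c (m + 1) n * beta) != 0 ->
        TT q (f m n) p
        = c m n / c m (n + 1)
          * ((g (m + 1) n p - alpha) * (g m (n + 1) p - c m (n + 1) * beta))
          / ((g m (n + 1) p - alpha) * (g (m + 1) n p - c (m + 1) n * beta))
          * f (m + 1) (n + 1) p &
      (TT q (f m (n + 1)) p - q * gamma) * (TT q (f (m + 1) n) p - c (m + 1) n * delta) != 0 ->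
        TT q (g m n) p
        = c (m + 1) n / c (m + 1) (n + 1)
          * ((TT q (f (m + 1) n) p - q * gamma) * (TT q (f m (n + 1)) p - c m (n + 1) * delta))
          / ((TT q (f m (n + 1)) p - q * gamma) * (TT q (f (m + 1) n) p - c (m + 1) n * delta))
          * g (m + 1) (n + 1) p].
Proof.
move=> q_neq0 e_neq0 _ tau_UC tau_neq0 tau_hom m n p hp /=; split.
- exact: f_evolution.
- exact: g_evolution.
- exact: f_forward.
- exact: g_forward.
Qed.
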